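(* For any $\beta\in(0,1)$ and any $b>0$, there exists a sequence of random variables $(X_n)_{n\ge 1}$ on some probability space such that (1) $n^\beta X_n \to 0$ in probability, (2) $|X_n|\le b$ almost surely for all $n$, and (3) the sequence $(n^\beta \bar X_n)_{n\ge1}$ is not uniformly tight, where $\bar X_n := \frac1n\sum_{i=1}^n X_i$. In particular, $n^\beta X_n\to 0$ in probability does not imply $n^\beta\bar X_n\to 0$ in probability.
   Context: A sequence of real random variables $(Z_n)_{n\ge1}$ is uniformly tight if for every $\varepsilon>0$ there exists $M<\infty$ with $\sup_n \Pr(|Z_n|>M)<\varepsilon$. $\bar X_n$ denotes the Cesàro mean $\frac1n\sum_{i=1}^n X_i$. *)

From HB Require Import structures.
From mathcomp Require Import all_boot all_order all_algebra.
From mathcomp Require Import all_classical all_reals all_analysis.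
Set Implicit Arguments. Unset Strict Implicit. Unset Printing Implicit Defensive.
Import Order.TTheory GRing.Theory Num.Theory.
Import numFieldNormedType.Exports.
Local Open Scope classical_set_scope.
Local Open Scope ring_scope.

(* Sequences are indexed by n >= 1; values at index 0 are irrelevant. *)

Definition cvg_in_prob0 {d} {T : measurableType d} {R : realType}
  (P : probability T R) (Z : nat -> T -> R) : Prop :=
  forall eps : R, 0 < eps ->
    (fun n => P [set w | eps < `|Z n w|]) @ \oo --> 0%E.

Definition uniformly_tight {d} {T : measurableType d} {R : realType}
  (P : probability T R) (Z : nat -> T -> R) : Prop :=
  forall eps : R, 0 < eps -> exists M : R,
    (ereal_sup [set P [set w | (M < `|Z n w|)%R] | n in [set n : nat | (0 < n)%N]]
      < eps%:E)%E.

Definition cesaro_mean {T : Type} {R : realType} (X : nat -> T -> R) (n : nat) : T -> R :=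
  fun w => (\sum_(1 <= i < n.+1) X i w) / n%:R.

(* The sample space is [0,1] with the uniform law and X_n = b * 1_{I_n}, where
   the closed intervals I_n sweep [0,1] ever more finely.  Time is cut into
   consecutive blocks; block k is cut into k+1 runs of a common length L_k,
   and during run j of block k the interval is I_n = [j/(k+1), (j+1)/(k+1)].
   - If n lies in block k then P(X_n <> 0) <= 1/(k+1); since the block index
     tends to infinity, every rescaling c_n X_n tends to 0 in probability.
   - At the last time n of block k, each w in [0,1] lies in the interval of
     some run, so X_i(w) = b for L_k indices i <= n and n * mean_n(w) >= L_k b.
     Taking L_k at least the start of block k (so that n <= (k+2) L_k) and so
     large that n^beta >= (k+1)(k+2) gives n^beta mean_n >= (k+1) b on [0,1].
   Hence P(n^beta |mean_n| > M) = 1 for some n, whatever M. *)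

From HB Require Import structures.
From mathcomp Require Import all_boot all_order all_algebra.
From mathcomp Require Import all_classical all_reals all_analysis.
From mathcomp Require Import measurable_realfun.
From mathcomp Require Import zify.
Set Implicit Arguments. Unset Strict Implicit. Unset Printing Implicit Defensive.
Import Order.TTheory GRing.Theory Num.Theory.
Local Open Scope classical_set_scope.
Local Open Scope ring_scope.

Section Blocks.
Variable min_len : nat -> nat.

(* Block k starts at [block_start k] and is made of k+1 runs of length
   [run_len k]; block 0 starts at time 1.  The run length exceeds both
   [min_len k] and the start of the block, so that the whole block has length
   comparable to a single run times the number of runs. *)
Fixpoint block_start (k : nat) : nat :=
  if k is k'.+1 then
    (block_start k' + k'.+1 * (block_start k' + min_len k' + 1))%N
  else 1%N.

Definition run_len (k : nat) : nat := (block_start k + min_len k + 1)%N.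

Lemma block_startS k : block_start k.+1 = (block_start k + k.+1 * run_len k)%N.
Proof. by []. Qed.

Lemma block_start_gt0 k : (0 < block_start k)%N.
Proof. by elim: k => //= k IH; lia. Qed.

Lemma block_start_lt k : (block_start k < block_start k.+1)%N.
Proof. rewrite block_startS /run_len; lia. Qed.

Lemma block_start_mono : {homo block_start : i j / (i <= j)%N}.
Proof. by apply: homo_leq leqnn leq_trans _ => k; exact/ltnW/block_start_lt. Qed.

(* [block n] is the index of the block containing n (time 0 goes to block 0). *)
Fixpoint block (n : nat) : nat :=
  if n is n'.+1 then
    if (block_start (block n').+1 <= n'.+1)%N then (block n').+1 else block n'
  else 0%N.

Lemma block_spec n :
  (block_start (block n) <= maxn n 1)%N /\ (n < block_start (block n).+1)%N.
Proof.
elim: n => [|n [lo hi]]; first by split => //=; lia.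
have := block_startS (block n); rewrite /run_len => e.
have next := block_start_lt (block n).+1.
by rewrite [block n.+1]/=; case: ifPn => h; split; lia.
Qed.

Lemma block_geq K n : (block_start K <= n)%N -> (K <= block n)%N.
Proof.
move=> h; rewrite leqNgt; apply/negP => /block_start_mono.
by have [_] := block_spec n; lia.
Qed.

Lemma block_eq k i :
  (block_start k <= i < block_start k.+1)%N -> block i = k.
Proof.
move=> /andP[lo hi]; have := block_start_gt0 k.
have [lo' hi'] := block_spec i.
by case: (ltngtP (block i) k) => // /block_start_mono; lia.
Qed.

Lemma block_cvg : block @ \oo --> \oo.
Proof.
apply/cvgnyPge => K; near=> n; apply: block_geq.
by near: n; exact: nbhs_infty_ge.
Unshelve. all: by end_near.
Qed.

Definition run (n : nat) : nat :=
  ((n - block_start (block n)) %/ run_len (block n))%N.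

Lemma run_in_block k j : (j <= k)%N ->
  (block_start k + j * run_len k + run_len k <= block_start k.+1)%N.
Proof.
move=> jk; rewrite block_startS -addnA leq_add2l.
by rewrite addnC -mulSn leq_mul2r ltnS jk orbT.
Qed.

Lemma block_run k j i : (j <= k)%N ->
  (block_start k + j * run_len k <= i < block_start k + j * run_len k + run_len k)%N ->
  block i = k /\ run i = j.
Proof.
move=> jk /andP[lo hi]; have run_end := run_in_block jk.
have bi : block i = k.
  by apply: block_eq; apply/andP; split; lia.
split=> //; rewrite /run bi.
have -> : (i - block_start k = j * run_len k + (i - block_start k - j * run_len k))%N.
  by lia.
rewrite divnMDl; last by rewrite /run_len; lia.
by rewrite divn_small ?addn0 //; lia.
Qed.

Lemma block_end_bounds k :
  (0 < (block_start k.+1).-1)%N /\ (min_len k <= (block_start k.+1).-1)%N /\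
  ((block_start k.+1).-1 <= k.+2 * run_len k)%N.
Proof.
have := block_start_gt0 k; rewrite block_startS /run_len => h.
by split; [|split]; lia.
Qed.

End Blocks.

Section RealFacts.
Variable R : realType.

Lemma unit_interval_cover (k : nat) (w : R) : 0 <= w <= 1 ->
  exists2 j, (j <= k)%N & j%:R / k.+1%:R <= w <= j.+1%:R / k.+1%:R.
Proof.
move=> /andP[w0 w1]; set x := w * k.+1%:R.
have x0 : 0 <= x by rewrite /x mulr_ge0.
have /andP[t1 t2] := truncn_itv x0.
have k0 : 0 < k.+1%:R :> R by rewrite ltr0n.
case: (leqP (Num.truncn x) k) => h.
- exists (Num.truncn x) => //.
  by rewrite !ler_pdivrMr // ler_pdivlMr // -/x t1 ltW.
- exists k => //.
  rewrite ler_pdivrMr // divff ?gt_eqF // w1 andbT -/x.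
  by apply: le_trans t1; rewrite ler_nat ltnW.
Qed.

Definition pow_threshold (beta c : R) : nat := (Num.truncn (c `^ beta^-1)).+1.

Lemma pow_threshold_le (beta c : R) (n : nat) : 0 < beta -> 0 <= c ->
  (pow_threshold beta c <= n)%N -> c <= n%:R `^ beta.
Proof.
move=> beta0 c0 hn.
have -> : c = (c `^ beta^-1) `^ beta by rewrite -powRrM mulVf ?gt_eqF ?powRr1.
apply: ge0_ler_powR; first exact: ltW.
- by rewrite nnegrE powR_ge0.
- by rewrite nnegrE.
by apply/ltW/(lt_le_trans (truncnS_gt _)); rewrite ler_nat.
Qed.

End RealFacts.

Section UniformUnitInterval.
Variable R : realType.

Definition unif01 : probability (measurableTypeR R) R := uniform_prob (@ltr01 R).

Lemma unif01_unit : unif01 `[0, 1]%classic = 1%:E.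
Proof. exact: integral_uniform_pdf1. Qed.

Lemma unif01_itv (x y : R) : x <= y -> (unif01 `[x, y]%classic <= (y - x)%:E)%E.
Proof.
move=> xy; have mI : measurable (`[x, y]%classic : set (measurableTypeR R)).
  exact: measurable_itv.
apply: (@le_trans _ _ (\int[lebesgue_measure]_(w in `[x, y]%classic) (cst 1%:E w))%E).
  apply: ge0_le_integral => //.
  - by move=> w _; rewrite lee_fin uniform_pdf_ge0.
  - apply/measurable_EFinP; apply: measurable_funTS; exact: measurable_uniform_pdf.
  - move=> w _; rewrite /uniform_pdf lee_fin; case: ifP => // _.
    by rewrite subr0 invr1.
rewrite integral_cst // mul1e.
apply: (@le_trans _ _ (lebesgue_measure ([set` `[x, y]] : set R))) => //.
by rewrite lebesgue_measure_itv /=; case: ifPn => _; rewrite -?EFinD lee_fin ?subr_ge0.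
Qed.

End UniformUnitInterval.

Lemma measurable_norm_gt d (T : measurableType d) (R : realType) (f : T -> R)
  (M : R) : measurable_fun setT f -> measurable [set w | M < `|f w|].
Proof.
move=> mf; have mnf : measurable_fun setT (fun w => `|f w|).
  exact: measurableT_comp (@normr_measurable _ _) mf.
have := mnf measurableT `]M, +oo[%classic (measurable_itv _).
rewrite setTI; congr measurable.
by apply/seteqP; split => w /=; rewrite in_itv /= andbT.
Qed.

Section Sweep.
Variables (R : realType) (beta b : R).

(* Run lengths of block k are at least the time from which n^beta >= (k+1)(k+2). *)
Definition sweep_len (k : nat) : nat := pow_threshold beta (k.+1 * k.+2)%:R.

Local Notation blk := (block sweep_len).
Local Notation rn := (run sweep_len).

Definition sweep_itv (n : nat) : set (measurableTypeR R) :=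
  `[(rn n)%:R / (blk n).+1%:R, (rn n).+1%:R / (blk n).+1%:R]%classic.

Lemma measurable_sweep_itv n : measurable (sweep_itv n).
Proof. exact: measurable_itv. Qed.

Definition sweep (n : nat) : {RV unif01 R >-> R} :=
  scale_mfun b (indic_mfun (sweep_itv n) (measurable_sweep_itv n)).

Lemma sweepE n w : sweep n w = \1_(sweep_itv n) w * b.
Proof. by []. Qed.

Lemma sweep_ge0 n w : 0 <= b -> 0 <= sweep n w.
Proof. by move=> b0; rewrite sweepE mulr_ge0. Qed.

Lemma sweep_bounded n w : 0 <= b -> `|sweep n w| <= b.
Proof.
move=> b0; rewrite sweepE indicE.
by case: (w \in _); rewrite ?mul1r ?mul0r ?normr0 ?ger0_norm.
Qed.

Lemma sweep_on n w : w \in sweep_itv n -> sweep n w = b.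
Proof. by rewrite sweepE indicE => ->; rewrite mul1r. Qed.

Lemma prob_sweep_itv n : (unif01 R (sweep_itv n) <= ((blk n).+1%:R^-1)%:E)%E.
Proof.
have m0 : 0 < (blk n).+1%:R :> R by rewrite ltr0n.
apply: le_trans (unif01_itv _) _; first by rewrite ler_pM2r ?invr_gt0 // ler_nat.
by rewrite lee_fin -mulrBl -natr1 addrAC subrr add0r mul1r.
Qed.

Lemma rescaled_sweep_cvg_in_prob0 (c : nat -> R) :
  cvg_in_prob0 (unif01 R) (fun n w => c n * sweep n w).
Proof.
move=> eps eps0.
apply: (@squeeze_cvge _ _ _ _ (fun=> 0%E) _ (fun n => ((blk n).+1%:R^-1)%:E)).
- near=> n; rewrite measure_ge0 andTb; apply: le_trans (prob_sweep_itv n).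
  apply: le_measure; rewrite ?inE.
  + by apply: measurable_norm_gt; apply: measurable_funM.
  + exact: measurable_sweep_itv.
  + move=> w /=; rewrite mindicE.
    case: (boolP (w \in _)) => [/set_mem //|_].
    by rewrite mul0r mulr0 normr0 ltNge (ltW eps0).
- exact: cvg_cst.
- exact: (cvg_comp _ _ (block_cvg _) cvge_harmonic).
Unshelve. all: by end_near.
Qed.

(* At the end of block k, each w in [0,1] has been covered by a whole run. *)
Lemma sweep_sum_end_of_block k w : 0 <= b -> 0 <= w <= 1 ->
  (run_len sweep_len k)%:R * b <=
    \sum_(1 <= i < block_start sweep_len k.+1) sweep i w.
Proof.
move=> b0 /(unit_interval_cover k) [j jk wj].
set L := run_len sweep_len k.
set a := (block_start sweep_len k + j * L)%N.
have on_run i : (a <= i < a + L)%N -> sweep i w = b.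
  move=> /(block_run jk) [bi ri]; apply: sweep_on.
  by rewrite inE /sweep_itv /= in_itv /= bi ri.
have a1 : (1 <= a)%N by have := block_start_gt0 sweep_len k; lia.
have aL : (a + L <= block_start sweep_len k.+1)%N by exact: run_in_block.
rewrite (big_cat_nat a1 (leq_trans (leq_addr L a) aL)).
rewrite (big_cat_nat (leq_addr L a) aL) /= (eq_big_nat _ _ on_run).
rewrite sumr_const_nat addKn mulr_natl.
by rewrite ler_wpDl ?ler_wpDr //; apply: sumr_ge0 => i _; exact: sweep_ge0.
Qed.

Lemma scaled_mean_end_of_block k w : 0 < beta -> 0 <= b -> 0 <= w <= 1 ->
  k.+1%:R * b <= ((block_start sweep_len k.+1).-1)%:R `^ beta *
    cesaro_mean (fun i t => sweep i t) (block_start sweep_len k.+1).-1 w.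
Proof.
move=> beta0 b0 w01.
have [n0 [nmin nmax]] := block_end_bounds sweep_len k.
have sum_ge := sweep_sum_end_of_block k b0 w01.
rewrite -(prednK (block_start_gt0 sweep_len k.+1)) in sum_ge.
set n := (block_start _ k.+1).-1 in n0 nmin nmax sum_ge *.
set L := run_len sweep_len k in nmax sum_ge *.
have pow_ge : (k.+1 * k.+2)%:R <= n%:R `^ beta.
  exact: pow_threshold_le beta0 (ler0n _ _) nmin.
have n_gt0 : 0 < n%:R :> R by rewrite ltr0n.
rewrite /cesaro_mean mulrA ler_pdivlMr //.
apply: (@le_trans _ _ ((k.+1 * k.+2)%:R * (L%:R * b))); last first.
  by apply: ler_pM => //; rewrite mulr_ge0.
rewrite natrM -!mulrA ler_wpM2l // [b * _]mulrC mulrA ler_wpM2r //.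
by rewrite -natrM ler_nat.
Qed.

(* Taking k > M / b, the event {M < n^beta |mean_n|} at the end of block k
   contains [0,1], hence has probability 1. *)
Lemma sweep_not_tight : 0 < beta -> 0 < b ->
  ~ uniformly_tight (unif01 R)
      (fun n w => n%:R `^ beta * cesaro_mean (fun i t => sweep i t) n w).
Proof.
move=> beta0 b0 /(_ 1 ltr01) [M]; rewrite ltNge => /negP; apply.
set k := Num.truncn (M / b).
have Mk : M < k.+1%:R * b by rewrite -ltr_pdivrMr // truncnS_gt.
have [n0 _] := block_end_bounds sweep_len k.
rewrite -(unif01_unit R); apply: le_trans (ereal_sup_ubound _); last first.
  by exists (block_start sweep_len k.+1).-1.
apply: le_measure; rewrite ?inE.
- exact: measurable_itv.
- apply: measurable_norm_gt; apply: measurable_funM => //.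
  apply: measurable_funM => //; apply: measurable_sum => i.
  exact: measurable_funM.
- move=> w; rewrite /= in_itv /= => /(scaled_mean_end_of_block k beta0 (ltW b0)).
  by move=> /(lt_le_trans Mk) Mlt; exact: lt_le_trans Mlt (ler_norm _).
Qed.

End Sweep.

Theorem proposition1 (R : realType) (beta b : R) (hb0 : 0 < beta) (hb1 : beta < 1)
  (hb : 0 < b) :
  exists (d : measure_display) (T : measurableType d) (P : probability T R)
         (X : nat -> {RV P >-> R}),
    cvg_in_prob0 P (fun n w => (n%:R `^ beta) * X n w) /\
    (forall n : nat, (0 < n)%N -> {ae P, forall w, `|X n w| <= b}) /\
    ~ uniformly_tight P (fun n w => (n%:R `^ beta) * cesaro_mean (fun (i : nat) (t : T) => X i t) n w).
Proof.
exists _, (measurableTypeR R), (unif01 R), (sweep beta b).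
split; [|split].
- exact: rescaled_sweep_cvg_in_prob0.
- by move=> n _; apply: aeW => w; exact/sweep_bounded/ltW.
- exact: sweep_not_tight.
Qed.
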